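(* For every irrational real $\alpha$ one has $\mathfrak k^*(\alpha)\ge\mathfrak k(\alpha)\ge2\lambda(\alpha)$, and if $\alpha$ is equivalent to $\sqrt2$ then $\mathfrak k^*(\alpha)=\mathfrak k(\alpha)=2\lambda(\alpha)$.
   Context: For irrational real $\alpha$ with continued fraction $\alpha=[a_0;a_1,a_2,\dots]$ and convergents $p_n/q_n$ ($n\ge0$), define for real $t\ge1$: $\psi_\alpha(t)=\min_{1\le q\le t,\,q\in\mathbb Z}\|q\alpha\|$ (where $\|x\|$ is the distance to the nearest integer), $\psi^{[2]}_\alpha(t)=\min\{|q\alpha-p|: p,q\in\mathbb Z,\ 1\le q\le t,\ (p,q)\ne(p_n,q_n)\ \forall n\ge0\}$, and $\psi^{[2]*}_\alpha(t)=\min\{|q\alpha-p|: p,q\in\mathbb Z,\ 1\le q\le t,\ p/q\ne p_n/q_n\ \forall n\ge0\}$. Set $\lambda(\alpha)=\liminf_{t\to\infty}t\psi_\alpha(t)$, $\mathfrak k(\alpha)=\liminf_{t\to\infty}t\psi^{[2]}_\alpha(t)$, $\mathfrak k^*(\alpha)=\liminf_{t\to\infty}t\psi^{[2]*}_\alpha(t)$. Two irrationals are equivalent if they are related by a Möbius map $x\mapsto(ax+b)/(cx+d)$ with integer entries and $ad-bc=\pm1$. *)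

From Stdlib Require Import Reals Lra ZArith Classical ClassicalEpsilon.
Open Scope R_scope.

Definition irrational (x : R) : Prop :=
  forall p q : Z, q <> 0%Z -> x <> IZR p / IZR q.

(** The minimum of a set of reals (junk value 0 if no minimum exists). *)
Definition is_min (S : R -> Prop) (m : R) : Prop :=
  S m /\ forall x, S x -> m <= x.
Definition Rmin_set (S : R -> Prop) : R :=
  epsilon (inhabits 0) (is_min S).

Definition dist_Z (x : R) : R :=
  Rmin_set (fun y => exists k : Z, y = Rabs (x - IZR k)).

(** Continued fraction expansion: complete quotients alpha_n,
    partial quotients a_n = floor(alpha_n) (Int_part is the floor). *)
Fixpoint cf_rem (x : R) (n : nat) : R :=
  match n with
  | O => x
  | S n' => / (cf_rem x n' - IZR (Int_part (cf_rem x n')))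
  end.
Definition cf_a (x : R) (n : nat) : Z := Int_part (cf_rem x n).

(** Convergents: cf_pq x n = ((p_n, q_n), (p_{n-1}, q_{n-1})),
    with p_{-1} = 1, q_{-1} = 0, p_0 = a_0, q_0 = 1. *)
Fixpoint cf_pq (x : R) (n : nat) : (Z * Z) * (Z * Z) :=
  match n with
  | O => ((cf_a x 0, 1%Z), (1%Z, 0%Z))
  | S n' =>
      let '((p, q), (p', q')) := cf_pq x n' in
      ((cf_a x n * p + p')%Z, (cf_a x n * q + q')%Z, (p, q))
  end.
Definition conv_p (x : R) (n : nat) : Z := fst (fst (cf_pq x n)).
Definition conv_q (x : R) (n : nat) : Z := snd (fst (cf_pq x n)).

Definition psi (a t : R) : R :=
  Rmin_set (fun y => exists q : Z, 1 <= IZR q <= t /\ y = dist_Z (IZR q * a)).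

Definition psi2 (a t : R) : R :=
  Rmin_set (fun y => exists p q : Z, 1 <= IZR q <= t /\
    (forall n : nat, (p, q) <> (conv_p a n, conv_q a n)) /\
    y = Rabs (IZR q * a - IZR p)).

Definition psi2s (a t : R) : R :=
  Rmin_set (fun y => exists p q : Z, 1 <= IZR q <= t /\
    (forall n : nat, IZR p / IZR q <> IZR (conv_p a n) / IZR (conv_q a n)) /\
    y = Rabs (IZR q * a - IZR p)).

Inductive ER : Type := NInf | Fin (r : R) | PInf.

Definition ER_le (x y : ER) : Prop :=
  match x, y with
  | NInf, _ => True
  | _, PInf => True
  | Fin a, Fin b => a <= b
  | _, _ => False
  end.

Definition ER_mul2 (x : ER) : ER :=
  match x with
  | Fin a => Fin (2 * a)
  | e => e
  end.

Definition is_liminf (f : R -> R) (l : ER) : Prop :=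
  match l with
  | Fin c => forall eps, eps > 0 ->
      (forall T, exists t, t >= T /\ f t < c + eps) /\
      (exists T, forall t, t >= T -> f t > c - eps)
  | PInf => forall M, exists T, forall t, t >= T -> f t > M
  | NInf => forall M T, exists t, t >= T /\ f t < M
  end.

Definition Liminf (f : R -> R) : ER := epsilon (inhabits NInf) (is_liminf f).

Definition lambda_ (a : R) : ER := Liminf (fun t => t * psi a t).
Definition kappa (a : R) : ER := Liminf (fun t => t * psi2 a t).
Definition kappa_star (a : R) : ER := Liminf (fun t => t * psi2s a t).

Definition equivalent (x y : R) : Prop :=
  exists a b c d : Z, ((a * d - b * c = 1) \/ (a * d - b * c = -1))%Z /\
    x = (IZR a * y + IZR b) / (IZR c * y + IZR d).

(* Let [q_n] be the convergent denominators and [m_n = q_n |q_n al - p_n|].  The inequality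
   [kappa <= kappa*] is the inclusion of the two index sets.  For [kappa >= 2 lambda], write a
   non-convergent pair with [q_n <= q < q_{n+1}] as [u (p_n, q_n) + v (p_{n+1}, q_{n+1})]; then
   [|q al - p| = |q_n al - p_n| |u - v theta|] with [theta] the fractional part of the next
   complete quotient, and [|u - v theta| >= 2] except for the intermediate fraction
   [(p_{n+1} - p_n) / (q_{n+1} - q_n)], which is handled through [a_{n+1}].  This yields
   [q |q al - p| >= 2 min (m_{n-1}, m_n, m_{n+1})], and [m_n >= q_n psi (q_n)].
   For [al = (a sqrt 2 + b) / (c sqrt 2 + d)], the identity
   [2 sqrt 2 q |q al - p| = |N(p, q) - (q al - p)^2 (d^2 - 2 c^2)|], with [N(p, q)] a nonzero
   integer norm, gives [lambda >= 1 / (2 sqrt 2)]; the pairs with [N(p, q) = -2] coming from the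
   powers of [3 - 2 sqrt 2] are not convergents and give [kappa* <= 1 / sqrt 2]. *)

From Stdlib Require Import Reals Lra Lia Psatz ZArith List Classical ClassicalEpsilon Nsatz.
Open Scope R_scope.

Lemma Rmin_set_is_min (S : R -> Prop) : (exists m, is_min S m) -> is_min S (Rmin_set S).
Proof. intros H. unfold Rmin_set. apply epsilon_spec. exact H. Qed.

Lemma list_has_min (l : list R) (S : R -> Prop) :
  (exists y, In y l /\ S y) ->
  exists m, In m l /\ S m /\ forall y, In y l -> S y -> m <= y.
Proof.
  induction l as [|h l IH]; intros [y [Hy Sy]]; [destruct Hy|].
  destruct (classic (exists y, In y l /\ S y)) as [Hl|Hl].
  - destruct (IH Hl) as [m [Hm [Sm Hmin]]].
    destruct (classic (S h /\ h <= m)) as [[Sh Hhm]|Hh].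
    + exists h. split; [left; reflexivity|split; [exact Sh|]].
      intros z [<-|Hz] Sz; [lra|]. specialize (Hmin z Hz Sz). lra.
    + exists m. split; [right; exact Hm|split; [exact Sm|]].
      intros z [<-|Hz] Sz; [|auto]. apply Rnot_lt_le. intros Hzm. apply Hh. split; [exact Sz|lra].
  - destruct Hy as [<-|Hy]; [|exfalso; apply Hl; eauto].
    exists h. split; [left; reflexivity|split; [exact Sy|]].
    intros z [<-|Hz] Sz; [lra|]. exfalso; apply Hl; eauto.
Qed.

Definition zrange (lo : Z) (n : nat) : list Z :=
  map (fun k => (lo + Z.of_nat k)%Z) (seq 0 n).

Lemma in_zrange lo n z : (lo <= z < lo + Z.of_nat n)%Z -> In z (zrange lo n).
Proof.
  intros H. apply in_map_iff. exists (Z.to_nat (z - lo)).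
  split; [lia|]. apply in_seq. lia.
Qed.

Lemma in_zrange_of_lt (z : Z) (B : R) :
  Rabs (IZR z) < B -> In z (zrange (- up B) (Z.to_nat (2 * up B + 1))).
Proof.
  intros Hz. destruct (archimed B) as [HB _].
  pose proof (Rle_abs (IZR z)). pose proof (Rle_abs (- IZR z)). rewrite Rabs_Ropp in *.
  assert (z < up B)%Z by (apply lt_IZR; lra).
  assert (- up B < z)%Z by (apply lt_IZR; rewrite opp_IZR; lra).
  apply in_zrange. rewrite Z2Nat.id; lia.
Qed.

(* Values [|q b - p|] below a given bound come from finitely many pairs [(p, q)]. *)
Lemma approx_values_have_min (b t : R) (S : R -> Prop) :
  (exists y, S y) ->
  (forall y, S y -> exists p q : Z, 1 <= IZR q <= t /\ y = Rabs (IZR q * b - IZR p)) ->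
  exists m, is_min S m.
Proof.
  intros [s0 Ss0] Hform.
  set (L := map (fun pq : Z * Z => Rabs (IZR (snd pq) * b - IZR (fst pq)))
                (list_prod (zrange (- up (t * Rabs b + s0 + 1)) (Z.to_nat (2 * up (t * Rabs b + s0 + 1) + 1)))
                           (zrange (- up (t + 1)) (Z.to_nat (2 * up (t + 1) + 1))))).
  assert (HL : forall y, S y -> y <= s0 -> In y L).
  { intros y Sy Hy. destruct (Hform y Sy) as [p [q [Hq ->]]].
    apply in_map_iff. exists (p, q). split; [reflexivity|]. apply in_prod.
    - apply in_zrange_of_lt.
      replace (IZR p) with (IZR q * b - (IZR q * b - IZR p)) by ring.
      eapply Rle_lt_trans; [apply Rabs_triang|]. rewrite Rabs_Ropp, Rabs_mult.
      rewrite (Rabs_right (IZR q)) by lra.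
      pose proof (Rabs_pos b). nra.
    - apply in_zrange_of_lt. rewrite Rabs_right; lra. }
  destruct (list_has_min L S) as [m [Hm [Sm Hmin]]].
  { exists s0. split; [apply HL; [exact Ss0|lra]|exact Ss0]. }
  exists m. split; [exact Sm|]. intros y Sy.
  destruct (Rle_dec y s0) as [Hy|Hy]; [exact (Hmin y (HL y Sy Hy) Sy)|].
  specialize (Hmin s0 (HL s0 Ss0 (Rle_refl _)) Ss0). lra.
Qed.

Lemma dist_Z_is_min (x : R) :
  is_min (fun y => exists k : Z, y = Rabs (x - IZR k)) (dist_Z x).
Proof.
  apply Rmin_set_is_min, (approx_values_have_min x 1).
  - exists (Rabs (x - IZR 0)). eauto.
  - intros y [k ->]. exists k, 1%Z. split; [lra|]. f_equal; ring.
Qed.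

Lemma dist_Z_attained (x : R) : exists k : Z, dist_Z x = Rabs (x - IZR k).
Proof. apply (proj1 (dist_Z_is_min x)). Qed.

Lemma dist_Z_le (x : R) (k : Z) : dist_Z x <= Rabs (x - IZR k).
Proof. apply (proj2 (dist_Z_is_min x)). eauto. Qed.
Definition eventually_gt (f : R -> R) (c : R) : Prop := exists T, forall t, t >= T -> f t > c.

Lemma is_liminf_exists (f : R -> R) : exists l, is_liminf f l.
Proof.
  destruct (classic (exists c, eventually_gt f c)) as [Hne|Hemp].
  - destruct (classic (forall M, eventually_gt f M)) as [Hall|Hnall]; [exists PInf; exact Hall|].
    apply not_all_ex_not in Hnall. destruct Hnall as [M0 HM0].
    assert (Hb : bound (eventually_gt f)).
    { exists M0. intros c [T HT]. apply Rnot_lt_le. intros Hc. apply HM0.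
      exists T. intros t Ht. specialize (HT t Ht). lra. }
    destruct (completeness _ Hb Hne) as [L [HLub HLleast]].
    exists (Fin L). intros eps Heps. split.
    + intros T. apply NNPP. intros Hn.
      enough (eventually_gt f (L + eps / 2)) by (specialize (HLub _ H); lra).
      exists T. intros t Ht. apply Rnot_le_lt. intros Hle. apply Hn. exists t. split; [exact Ht|lra].
    + apply NNPP. intros Hn.
      enough (is_upper_bound (eventually_gt f) (L - eps)) by (specialize (HLleast _ H); lra).
      intros c [T HT]. apply Rnot_lt_le. intros Hc. apply Hn.
      exists T. intros t Ht. specialize (HT t Ht). lra.
  - exists NInf. intros M T. apply NNPP. intros Hn. apply Hemp.
    exists (M - 1), T. intros t Ht. apply Rnot_le_lt. intros Hle. apply Hn. exists t. split; [exact Ht|lra].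
Qed.

Lemma Liminf_spec (f : R -> R) : is_liminf f (Liminf f).
Proof. unfold Liminf. apply epsilon_spec, is_liminf_exists. Qed.

Definition ER_scale (k : R) (x : ER) : ER :=
  match x with Fin a => Fin (k * a) | e => e end.

Lemma ER_scale_1 (x : ER) : ER_scale 1 x = x.
Proof. destruct x; simpl; auto; f_equal; ring. Qed.

Lemma ER_scale_2 (x : ER) : ER_scale 2 x = ER_mul2 x.
Proof. destruct x; reflexivity. Qed.

Lemma ER_le_trans (x y z : ER) : ER_le x y -> ER_le y z -> ER_le x z.
Proof. destruct x, y, z; simpl; intuition lra. Qed.

Lemma ER_le_antisym (x y : ER) : ER_le x y -> ER_le y x -> x = y.
Proof. destruct x, y; simpl; intros H1 H2; try contradiction; auto; f_equal; lra. Qed.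

Lemma ER_le_mul2 (x : R) (y : ER) : ER_le (Fin x) y -> ER_le (Fin (2 * x)) (ER_mul2 y).
Proof. destruct y; simpl; auto; lra. Qed.

Lemma Liminf_scale_le (k : R) (f g : R -> R) : 0 < k ->
  (forall c, eventually_gt f c -> eventually_gt g (k * c)) ->
  ER_le (ER_scale k (Liminf f)) (Liminf g).
Proof.
  intros Hk H. pose proof (Liminf_spec f) as Hf. pose proof (Liminf_spec g) as Hg.
  destruct (Liminf f) as [|L|]; destruct (Liminf g) as [|K|]; simpl in *; auto.
  - destruct (H (L - 1) (proj2 (Hf 1 ltac:(lra)))) as [T HT].
    destruct (Hg (k * (L - 1)) T) as [t [Ht Hgt]]. specialize (HT t Ht). lra.
  - apply Rnot_lt_le. intros Hlt.
    set (e := (k * L - K) / (2 * k + 1)).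
    assert (He : 0 < e) by (apply Rdiv_lt_0_compat; lra).
    assert (Hke : (2 * k + 1) * e = k * L - K) by (unfold e; field; lra).
    destruct (H (L - e) (proj2 (Hf e He))) as [T HT].
    destruct (proj1 (Hg e He) T) as [t [Ht Hgt]]. specialize (HT t Ht). nra.
  - destruct (H (1 / k) (Hf (1 / k))) as [T HT].
    destruct (Hg 1 T) as [t [Ht Hgt]]. specialize (HT t Ht).
    replace (k * (1 / k)) with 1 in HT by (field; lra). lra.
  - destruct (H ((K + 1) / k) (Hf _)) as [T HT].
    destruct (proj1 (Hg 1 ltac:(lra)) T) as [t [Ht Hgt]]. specialize (HT t Ht).
    replace (k * ((K + 1) / k)) with (K + 1) in HT by (field; lra). lra.
Qed.

Lemma Liminf_le_Fin (g : R -> R) (c : R) :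
  (forall eps, eps > 0 -> forall T, exists t, t >= T /\ g t < c + eps) ->
  ER_le (Liminf g) (Fin c).
Proof.
  intros H. pose proof (Liminf_spec g) as Hg.
  destruct (Liminf g) as [|K|]; simpl in *; auto.
  - apply Rnot_lt_le. intros Hlt.
    destruct (proj2 (Hg ((K - c) / 2) ltac:(lra))) as [T HT].
    destruct (H ((K - c) / 2) ltac:(lra) T) as [t [Ht Hgt]]. specialize (HT t Ht). lra.
  - destruct (Hg (c + 1)) as [T HT].
    destruct (H 1 ltac:(lra) T) as [t [Ht Hgt]]. specialize (HT t Ht). lra.
Qed.

Lemma Fin_le_Liminf (f : R -> R) (c : R) :
  (forall eps, eps > 0 -> eventually_gt f (c - eps)) ->
  ER_le (Fin c) (Liminf f).
Proof.
  intros H. pose proof (Liminf_spec f) as Hf.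
  destruct (Liminf f) as [|L|]; simpl in *; auto.
  - destruct (H 1 ltac:(lra)) as [T HT].
    destruct (Hf (c - 1) T) as [t [Ht Hft]]. specialize (HT t Ht). lra.
  - apply Rnot_lt_le. intros Hlt.
    destruct (H ((c - L) / 2) ltac:(lra)) as [T HT].
    destruct (proj1 (Hf ((c - L) / 2) ltac:(lra)) T) as [t [Ht Hft]]. specialize (HT t Ht). lra.
Qed.

Lemma sqrt2_irrational_Z (X Y : Z) : (Y * Y = 2 * X * X)%Z -> X = 0%Z.
Proof.
  revert Y. induction X as [X IH] using Z_lt_abs_induction. intros Y HXY.
  destruct (Z.Even_or_Odd Y) as [[y ->]|[y ->]]; [|exfalso; nia].
  destruct (Z.Even_or_Odd X) as [[x ->]|[x ->]]; [|exfalso; nia].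
  destruct (Z.eq_dec x 0) as [->|Hx]; [reflexivity|].
  exfalso. apply Hx, (IH x ltac:(lia) y). nia.
Qed.

Lemma sqrt2_sq : sqrt 2 * sqrt 2 = 2.
Proof. apply sqrt_sqrt. lra. Qed.

Lemma sqrt2_bounds : 1.41 < sqrt 2 < 1.42.
Proof. pose proof sqrt2_sq. pose proof (sqrt_pos 2). split; nra. Qed.

Lemma small_square_bound (K e : R) : 0 <= K -> 0 < e ->
  exists eta, 0 < eta <= 1 /\ K * (eta * eta) <= e.
Proof.
  intros HK He. set (m := Rmin 1 (e / (K + 1))). exists m.
  assert (H1 : m <= 1) by apply Rmin_l.
  assert (H2 : m <= e / (K + 1)) by apply Rmin_r.
  assert (H0 : 0 < m) by (apply Rmin_glb_lt; [lra|apply Rdiv_lt_0_compat; lra]).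
  assert (H3 : (K + 1) * (e / (K + 1)) = e) by (field; lra).
  split; [lra|].
  assert (K * (m * m) <= K * m) by (apply Rmult_le_compat_l; nra).
  assert ((K + 1) * m <= e) by nra.
  nra.
Qed.

Lemma sq_le_of_abs_le (x e : R) : Rabs x <= e -> x * x <= e * e.
Proof.
  intros H. pose proof (Rabs_pos x).
  assert (x * x = Rabs x * Rabs x) by (rewrite <- Rabs_mult; symmetry; apply Rabs_right; nra).
  nra.
Qed.

(* Multiplication by the unit [3 - 2 sqrt 2] preserves the norm [Y^2 - 2 X^2] and shrinks [X sqrt 2 + Y]. *)
Lemma pell_minus2_power k : exists X Y : Z, (Y * Y - 2 * X * X = -2)%Z /\
  IZR X * sqrt 2 + IZR Y = sqrt 2 * (3 - 2 * sqrt 2) ^ k.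
Proof.
  pose proof sqrt2_sq as Hs.
  induction k as [|k [X [Y [HN HE]]]]; [exists 1%Z, 0%Z; split; [lia|simpl; ring]|].
  exists (3 * X - 2 * Y)%Z, (3 * Y - 4 * X)%Z. split; [nia|].
  rewrite !minus_IZR, !mult_IZR.
  replace (sqrt 2 * (3 - 2 * sqrt 2) ^ S k)
    with ((3 - 2 * sqrt 2) * (sqrt 2 * (3 - 2 * sqrt 2) ^ k)) by (simpl; ring).
  rewrite <- HE.
  replace (IZR 4) with (2 * (sqrt 2 * sqrt 2)) by (rewrite Hs; reflexivity). ring.
Qed.

Lemma pell_minus2_small eta : 0 < eta -> exists X Y : Z,
  (Y * Y - 2 * X * X = -2)%Z /\ Rabs (IZR X * sqrt 2 + IZR Y) < eta.
Proof.
  intros He. pose proof sqrt2_bounds.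
  destruct (pow_lt_1_zero (3 - 2 * sqrt 2) ltac:(rewrite Rabs_right; lra) (eta / sqrt 2)
    ltac:(apply Rdiv_lt_0_compat; lra)) as [N HN].
  destruct (pell_minus2_power N) as [X [Y [HXY HE]]]. exists X, Y. split; [exact HXY|].
  rewrite HE, Rabs_mult, (Rabs_right (sqrt 2)) by lra.
  specialize (HN N (le_n _)). apply (Rmult_lt_compat_l (sqrt 2)) in HN; [|lra].
  replace (sqrt 2 * (eta / sqrt 2)) with eta in HN by (field; lra). exact HN.
Qed.

Lemma ratio_eq_cross (p q p' q' : Z) : (q <> 0)%Z -> (q' <> 0)%Z ->
  IZR p / IZR q = IZR p' / IZR q' -> (p * q' = p' * q)%Z.
Proof.
  intros Hq Hq' E. apply not_0_IZR in Hq. apply not_0_IZR in Hq'.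
  apply eq_IZR. rewrite !mult_IZR.
  replace (IZR p) with (IZR p / IZR q * IZR q) by (field; assumption).
  rewrite E. field. assumption.
Qed.

Lemma irrational_inv_sub (x : R) (k : Z) : irrational x -> irrational (/ (x - IZR k)).
Proof.
  intros Hx p q Hq E.
  assert (Hxk : x - IZR k <> 0).
  { intros E'. apply (Hx k 1%Z); [lia|]. unfold Rdiv. rewrite Rinv_1. lra. }
  destruct (Z.eq_dec p 0) as [->|Hp].
  - unfold Rdiv in E. rewrite Rmult_0_l in E. exact (Rinv_neq_0_compat _ Hxk E).
  - apply (Hx (k * p + q)%Z p Hp).
    assert (IZR p <> 0) by (apply not_0_IZR; exact Hp).
    assert (IZR q <> 0) by (apply not_0_IZR; exact Hq).
    assert (Hinv : x - IZR k = IZR q / IZR p).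
    { rewrite <- (Rinv_inv (x - IZR k)), E. field. auto. }
    rewrite plus_IZR, mult_IZR.
    replace x with (IZR k + (x - IZR k)) by ring. rewrite Hinv. field. auto.
Qed.

Lemma bracket_coords (A B q u v : Z) (f : R) :
  (1 <= A <= B)%Z -> (A <= q < B)%Z -> q = (u * A + v * B)%Z -> 0 < f < 1 ->
  (u = 1 /\ v = 0)%Z \/ (u = -1 /\ v = 1)%Z \/ 2 <= Rabs (IZR u - IZR v * f).
Proof.
  intros HAB Hq -> Hf.
  destruct (Z_lt_le_dec v 0) as [Hv|Hv].
  - assert (Hu : (2 <= u)%Z) by nia. apply IZR_le in Hu. apply IZR_lt in Hv.
    right; right. rewrite Rabs_right; nra.
  - destruct (Z.eq_dec v 0) as [->|Hv0].
    + assert (Hu : (1 <= u)%Z) by nia.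
      destruct (Z.eq_dec u 1) as [->|Hu1]; [left; lia|].
      assert (Hu2 : (2 <= u)%Z) by lia. apply IZR_le in Hu2.
      right; right. rewrite Rabs_right; simpl; lra.
    + assert (Hu : (u <= -1)%Z) by nia.
      destruct (Z.eq_dec u (-1)) as [->|Hu1]; [right; left; nia|].
      assert (Hu2 : (u <= -2)%Z) by lia. apply IZR_le in Hu2.
      assert (Hv1 : (1 <= v)%Z) by lia. apply IZR_le in Hv1.
      right; right. rewrite Rabs_left; nra.
Qed.

Lemma mediant_ineq (A C x y : R) : 0 < A -> 0 <= C -> 0 < x -> 0 < y ->
  2 * (C * (2 * x + y)) <= (A + C) * (x + y) \/ 2 * (A * x) <= (A + C) * (x + y) \/
  2 * ((2 * A + C) * y) <= (A + C) * (x + y).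
Proof.
  intros. destruct (Rle_or_lt (2 * (C * (2 * x + y))) ((A + C) * (x + y))); auto.
  destruct (Rle_or_lt (2 * (A * x)) ((A + C) * (x + y))); auto.
  destruct (Rle_or_lt (2 * ((2 * A + C) * y)) ((A + C) * (x + y))); auto.
  exfalso. nra.
Qed.

Section ContinuedFraction.
Variable al : R.
Hypothesis Hirr : irrational al.

Definition frac n := cf_rem al n - IZR (cf_a al n).
Definition num n := conv_p al n.
Definition den n := conv_q al n.
Definition num_prev n := fst (snd (cf_pq al n)).
Definition den_prev n := snd (snd (cf_pq al n)).
Definition dev n := IZR (den n) * al - IZR (num n).
Definition err n := Rabs (dev n).
Definition quality n := IZR (den n) * err n.

Lemma convergents_0 :
  num 0 = cf_a al 0 /\ den 0 = 1%Z /\ num_prev 0 = 1%Z /\ den_prev 0 = 0%Z.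
Proof. repeat split. Qed.

Lemma convergents_S n :
  num (S n) = (cf_a al (S n) * num n + num_prev n)%Z /\
  den (S n) = (cf_a al (S n) * den n + den_prev n)%Z /\
  num_prev (S n) = num n /\ den_prev (S n) = den n.
Proof.
  unfold num, den, num_prev, den_prev, conv_p, conv_q. simpl.
  destruct (cf_pq al n) as [[p q] [p' q']]. repeat split.
Qed.

Lemma irrational_cf_rem n : irrational (cf_rem al n).
Proof. induction n; [exact Hirr|]. apply irrational_inv_sub, IHn. Qed.

Lemma frac_bounds n : 0 < frac n < 1.
Proof.
  unfold frac, cf_a. destruct (base_Int_part (cf_rem al n)) as [H1 H2].
  split; [|lra].
  destruct (Rle_lt_or_eq_dec _ _ H1) as [Hlt|Heq]; [lra|].
  exfalso. apply (irrational_cf_rem n (Int_part (cf_rem al n)) 1%Z); [lia|].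
  unfold Rdiv. rewrite Rinv_1. lra.
Qed.

Lemma frac_S n : frac (S n) = / frac n - IZR (cf_a al (S n)).
Proof. reflexivity. Qed.

Lemma cf_a_pos n : (1 <= cf_a al (S n))%Z.
Proof.
  pose proof (frac_bounds n) as Hf.
  assert (H1 : 1 < cf_rem al (S n)).
  { change (1 < / frac n). rewrite <- Rinv_1. apply Rinv_lt_contravar; lra. }
  unfold cf_a. destruct (base_Int_part (cf_rem al (S n))) as [H2 H3].
  assert (0 < IZR (Int_part (cf_rem al (S n)))) by lra.
  apply lt_IZR in H. lia.
Qed.

Lemma dev_eq n : dev n = - frac n * (IZR (den_prev n) * al - IZR (num_prev n)).
Proof.
  induction n as [|n IH].
  - unfold dev, frac, den, num, den_prev, num_prev, conv_p, conv_q. cbn [cf_pq fst snd cf_rem]. ring.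
  - pose proof (frac_bounds n).
    assert (Hprev : IZR (den_prev n) * al - IZR (num_prev n) = - dev n / frac n)
      by (rewrite IH; field; lra).
    destruct (convergents_S n) as [Hp [Hq [-> ->]]].
    unfold dev at 1. rewrite Hp, Hq, frac_S, !plus_IZR, !mult_IZR.
    transitivity (IZR (cf_a al (S n)) * dev n + (IZR (den_prev n) * al - IZR (num_prev n)));
      [unfold dev; ring|].
    rewrite Hprev. fold (dev n). field. lra.
Qed.

Lemma dev_S n : dev (S n) = - frac (S n) * dev n.
Proof.
  rewrite dev_eq. destruct (convergents_S n) as [_ [_ [-> ->]]]. reflexivity.
Qed.

Lemma dev_0 : dev 0 = frac 0.
Proof. rewrite dev_eq. destruct convergents_0 as [_ [_ [-> ->]]]. ring. Qed.

Lemma err_S n : err (S n) = frac (S n) * err n.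
Proof.
  unfold err. rewrite dev_S, Rabs_mult, Rabs_Ropp.
  pose proof (frac_bounds (S n)). rewrite Rabs_right by lra. reflexivity.
Qed.

Lemma err_0 : err 0 = frac 0.
Proof. unfold err. rewrite dev_0. pose proof (frac_bounds 0). apply Rabs_right. lra. Qed.

Lemma err_pos n : 0 < err n.
Proof.
  induction n; [rewrite err_0; apply frac_bounds|].
  rewrite err_S. pose proof (frac_bounds (S n)). nra.
Qed.

Lemma err_decr n : err (S n) < err n.
Proof. rewrite err_S. pose proof (frac_bounds (S n)). pose proof (err_pos n). nra. Qed.

Lemma err_lt_1 n : err n < 1.
Proof.
  induction n; [rewrite err_0; apply frac_bounds|].
  pose proof (err_decr n). lra.
Qed.

Lemma convergents_det n :
  (den_prev n * num n - num_prev n * den n = 1)%Z \/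
  (den_prev n * num n - num_prev n * den n = -1)%Z.
Proof.
  induction n as [|n IH]; [right; reflexivity|].
  destruct (convergents_S n) as [-> [-> [-> ->]]]. lia.
Qed.

Lemma den_pos n : (1 <= den n)%Z /\ (0 <= den_prev n)%Z.
Proof.
  induction n as [|n IH]; [split; discriminate|].
  destruct (convergents_S n) as [_ [-> [_ ->]]]. pose proof (cf_a_pos n). nia.
Qed.

Lemma den_le_S n : (den n <= den (S n))%Z.
Proof.
  destruct (convergents_S n) as [_ [-> _]]. pose proof (cf_a_pos n). pose proof (den_pos n). nia.
Qed.

Lemma den_lt_SS n : (den (S n) < den (S (S n)))%Z.
Proof.
  destruct (convergents_S (S n)) as [_ [-> _]]. destruct (convergents_S n) as [_ [_ [_ ->]]].
  pose proof (cf_a_pos (S n)). pose proof (den_pos n). pose proof (den_pos (S n)). nia.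
Qed.

Lemma den_ge_index n : (Z.of_nat n <= den n)%Z.
Proof.
  induction n as [|[|n] IH]; [pose proof (den_pos 0); lia|pose proof (den_pos 1); lia|].
  pose proof (den_lt_SS n). lia.
Qed.

Lemma den_monotone m n : (m <= n)%nat -> (den m <= den n)%Z.
Proof. induction 1 as [|n _ IH]; [lia|]. pose proof (den_le_S n). lia. Qed.

Lemma den_err_identity n : IZR (den (S n)) * err n + IZR (den n) * err (S n) = 1.
Proof.
  set (D := (den_prev (S n) * num (S n) - num_prev (S n) * den (S n))%Z).
  assert (E : dev n * (IZR (den (S n)) + IZR (den n) * frac (S n)) = IZR D).
  { transitivity (IZR (den (S n)) * dev n - IZR (den n) * dev (S n)); [rewrite dev_S; ring|].
    unfold D. destruct (convergents_S n) as [_ [_ [-> ->]]].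
    unfold dev. rewrite minus_IZR, !mult_IZR. ring. }
  apply (f_equal Rabs) in E. rewrite Rabs_mult in E. fold (err n) in E.
  pose proof (den_pos n) as [Hn _]. pose proof (den_pos (S n)) as [HSn _].
  apply IZR_le in Hn. apply IZR_le in HSn. pose proof (frac_bounds (S n)).
  rewrite (Rabs_right (_ + _)) in E by nra.
  assert (HD : Rabs (IZR D) = 1).
  { destruct (convergents_det (S n)) as [HD|HD]; fold D in HD; rewrite HD;
      [apply Rabs_R1|rewrite Rabs_left; simpl; lra]. }
  rewrite err_S. lra.
Qed.

Lemma quality_le_1 n : quality n <= 1.
Proof.
  pose proof (den_err_identity n). pose proof (den_le_S n) as Hle. apply IZR_le in Hle.
  pose proof (err_pos n). pose proof (err_pos (S n)). pose proof (den_pos n) as [Hn _].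
  apply IZR_le in Hn. unfold quality. nra.
Qed.

Lemma quality_sum_le_1 n : quality n + quality (S n) <= 1.
Proof.
  rewrite <- (den_err_identity n). pose proof (den_le_S n) as Hle. apply IZR_le in Hle.
  pose proof (err_decr n). unfold quality. nra.
Qed.


Lemma err_rec n : err n = IZR (cf_a al (S (S n))) * err (S n) + err (S (S n)).
Proof.
  rewrite (err_S (S n)), frac_S, (err_S n). pose proof (frac_bounds (S n)). field. lra.
Qed.

Lemma den_bracket M (q : Z) : (den M <= q)%Z ->
  exists n, (M <= n)%nat /\ (den n <= q < den (S n))%Z.
Proof.
  intros H.
  assert (G : forall k, (exists n, (M <= n)%nat /\ (den n <= q < den (S n))%Z) \/ (den (M + k) <= q)%Z).
  { induction k as [|k [IH|IH]]; [right; rewrite Nat.add_0_r; exact H|left; exact IH|].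
    destruct (Z_lt_le_dec q (den (S (M + k)))) as [Hlt|Hle].
    - left. exists (M + k)%nat. split; lia.
    - right. rewrite Nat.add_succ_r. exact Hle. }
  destruct (G (Z.to_nat q + 1)%nat) as [|Hk]; [assumption|].
  pose proof (den_ge_index (M + (Z.to_nat q + 1))). lia.
Qed.

Lemma convergent_basis n (p q : Z) : exists u v : Z,
  p = (u * num n + v * num (S n))%Z /\ q = (u * den n + v * den (S n))%Z.
Proof.
  set (D := (num n * den (S n) - den n * num (S n))%Z).
  assert (HD : (D * D = 1)%Z).
  { destruct (convergents_S n) as [_ [_ [Hp Hq]]].
    destruct (convergents_det (S n)) as [H|H]; rewrite Hp, Hq in H; unfold D; nia. }
  exists (D * (p * den (S n) - q * num (S n)))%Z, (D * (q * num n - p * den n))%Z.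
  split.
  - transitivity (D * D * p)%Z; [rewrite HD; ring|unfold D; ring].
  - transitivity (D * D * q)%Z; [rewrite HD; ring|unfold D; ring].
Qed.

Lemma dev_combination n (u v : Z) :
  Rabs (IZR (u * den n + v * den (S n)) * al - IZR (u * num n + v * num (S n))) =
  err n * Rabs (IZR u - IZR v * frac (S n)).
Proof.
  unfold err. rewrite <- Rabs_mult. f_equal.
  rewrite !plus_IZR, !mult_IZR.
  transitivity (IZR u * dev n + IZR v * dev (S n)); [unfold dev; ring|].
  rewrite dev_S. ring.
Qed.

Lemma best_approximation n (p q : Z) : (1 <= q < den (S n))%Z ->
  err n <= Rabs (IZR q * al - IZR p).
Proof.
  intros Hq. destruct (convergent_basis n p q) as [u [v [-> ->]]].
  rewrite dev_combination. pose proof (err_pos n).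
  pose proof (den_pos n) as [Hn _]. pose proof (den_pos (S n)) as [HSn _].
  pose proof (den_le_S n). pose proof (frac_bounds (S n)).
  enough (1 <= Rabs (IZR u - IZR v * frac (S n))) by nra.
  destruct (Z_lt_le_dec v 0) as [Hv|Hv].
  - assert (Hu : (1 <= u)%Z) by nia. apply IZR_le in Hu. apply IZR_lt in Hv.
    rewrite Rabs_right; nra.
  - destruct (Z.eq_dec v 0) as [->|Hv0].
    + assert (Hu : (1 <= u \/ u <= -1)%Z) by nia.
      destruct Hu as [Hu|Hu]; apply IZR_le in Hu;
        [rewrite Rabs_right|rewrite Rabs_left]; simpl; lra.
    + assert (Hu : (u <= -1)%Z) by nia. apply IZR_le in Hu.
      assert (Hv1 : (1 <= v)%Z) by lia. apply IZR_le in Hv1.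
      rewrite Rabs_left; nra.
Qed.

(* [v] is [q |q al - p|] for the intermediate fraction [(p_{k+2} - p_{k+1}) / (q_{k+2} - q_{k+1})];
   it is a convergent when [a_{k+2} = 1], and [a_{k+2} = 2] is the case needing all three qualities. *)
Lemma intermediate_quality_bound k :
  (forall j, ((num (S (S k)) - num (S k))%Z, (den (S (S k)) - den (S k))%Z) <> (num j, den j)) ->
  let v := IZR (den (S (S k)) - den (S k)) * (err (S k) + err (S (S k))) in
  2 * quality k <= v \/ 2 * quality (S k) <= v \/ 2 * quality (S (S k)) <= v.
Proof.
  intros Hnc v. unfold v, quality.
  destruct (convergents_S (S k)) as [Hp [Hq _]].
  destruct (convergents_S k) as [_ [_ [Hpk Hqk]]]. rewrite Hpk in Hp. rewrite Hqk in Hq.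
  pose proof (cf_a_pos (S k)) as Ha. pose proof (err_rec k) as Hrec.
  pose proof (den_pos k) as [Hk _]. pose proof (den_pos (S k)) as [HSk _].
  pose proof (err_pos (S k)). pose proof (err_pos (S (S k))).
  destruct (Z.eq_dec (cf_a al (S (S k))) 1) as [Ha1|Ha1].
  { exfalso. apply (Hnc k). rewrite Hp, Hq, Ha1. f_equal; ring. }
  destruct (Z.eq_dec (cf_a al (S (S k))) 2) as [Ha2|Ha2].
  - rewrite Ha2 in Hrec, Hq.
    replace (den (S (S k)) - den (S k))%Z with (den (S k) + den k)%Z by (rewrite Hq; ring).
    rewrite Hrec, Hq, !plus_IZR, mult_IZR.
    apply mediant_ineq; [apply IZR_lt; lia|apply IZR_le; lia|assumption|assumption].
  - right; left.
    assert (H2 : (2 * den (S k) <= den (S (S k)) - den (S k))%Z) by (rewrite Hq; nia).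
    apply IZR_le in HSk. apply IZR_le in H2. rewrite mult_IZR in H2. nra.
Qed.

Lemma nonconvergent_quality_bound k (p q : Z) :
  (den (S k) <= q < den (S (S k)))%Z -> (forall j, (p, q) <> (num j, den j)) ->
  let v := IZR q * Rabs (IZR q * al - IZR p) in
  2 * quality k <= v \/ 2 * quality (S k) <= v \/ 2 * quality (S (S k)) <= v.
Proof.
  intros Hq Hnc v. unfold v. set (n := S k) in *.
  destruct (convergent_basis n p q) as [u [w [Hp Hq']]].
  assert (Hval : Rabs (IZR q * al - IZR p) = err n * Rabs (IZR u - IZR w * frac (S n)))
    by (rewrite Hp, Hq'; apply dev_combination).
  pose proof (den_pos n) as [Hn _]. pose proof (den_le_S n). pose proof (frac_bounds (S n)).
  pose proof (err_pos n).
  destruct (bracket_coords (den n) (den (S n)) q u w (frac (S n))) as [[-> ->]|[[-> ->]|H2]];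
    try lia; try assumption.
  - exfalso. apply (Hnc n). rewrite Hp, Hq'. f_equal; ring.
  - assert (Ep : p = (num (S n) - num n)%Z) by lia.
    assert (Eq : q = (den (S n) - den n)%Z) by lia.
    rewrite Hval, Rabs_left by (simpl; lra).
    replace (err n * - (IZR (-1) - IZR 1 * frac (S n))) with (err n + err (S n))
      by (rewrite err_S; simpl; ring).
    rewrite Eq. apply intermediate_quality_bound. unfold n in Ep, Eq. rewrite <- Ep, <- Eq. exact Hnc.
  - right; left. rewrite Hval. unfold quality.
    assert (Hqn : IZR (den n) <= IZR q) by (apply IZR_le; lia). apply IZR_le in Hn.
    set (r := Rabs (IZR u - IZR w * frac (S n))) in *.
    assert (0 <= (IZR q - IZR (den n)) * (err n * r)) by (apply Rmult_le_pos; nra).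
    assert (0 <= IZR (den n) * (err n * (r - 2))) by (apply Rmult_le_pos; nra).
    nra.
Qed.

Lemma psi_is_min t : 1 <= t ->
  is_min (fun y => exists q : Z, 1 <= IZR q <= t /\ y = dist_Z (IZR q * al)) (psi al t).
Proof.
  intros Ht. apply Rmin_set_is_min, (approx_values_have_min al t).
  - exists (dist_Z (IZR 1 * al)), 1%Z. split; [lra|reflexivity].
  - intros y [q [Hq ->]]. destruct (dist_Z_attained (IZR q * al)) as [k Hk].
    exists k, q. split; assumption.
Qed.

Lemma psi_le_err k : psi al (IZR (den k)) <= err k.
Proof.
  pose proof (den_pos k) as [H _]. apply IZR_le in H.
  eapply Rle_trans; [apply (psi_is_min _ H); exists (den k); split; [lra|reflexivity]|].
  apply dist_Z_le.
Qed.

Lemma convergent_dist_lt_1 n : Rabs (al - IZR (num n) / IZR (den n)) < 1.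
Proof.
  pose proof (den_pos n) as [H _]. apply IZR_le in H.
  replace (al - IZR (num n) / IZR (den n)) with (dev n / IZR (den n)) by (unfold dev; field; lra).
  unfold Rdiv. rewrite Rabs_mult, Rabs_inv, (Rabs_right (IZR (den n))) by lra. fold (err n).
  pose proof (err_lt_1 n). pose proof (err_pos n).
  assert (/ IZR (den n) <= 1) by (rewrite <- Rinv_1; apply Rinv_le_contravar; lra).
  assert (0 < / IZR (den n)) by (apply Rinv_0_lt_compat; lra). nra.
Qed.

Lemma floor_add_2_not_convergent n :
  IZR (cf_a al 0 + 2) / IZR 1 <> IZR (num n) / IZR (den n).
Proof.
  intros E. pose proof (convergent_dist_lt_1 n) as H. rewrite <- E in H.
  unfold cf_a in H. simpl in H. destruct (base_Int_part al).
  rewrite plus_IZR, Rabs_left in H by (simpl; lra). simpl in H. lra.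
Qed.

Lemma psi2_is_min t : 1 <= t ->
  is_min (fun y => exists p q : Z, 1 <= IZR q <= t /\
    (forall n, (p, q) <> (conv_p al n, conv_q al n)) /\ y = Rabs (IZR q * al - IZR p))
    (psi2 al t).
Proof.
  intros Ht. apply Rmin_set_is_min, (approx_values_have_min al t).
  - exists (Rabs (IZR 1 * al - IZR (cf_a al 0 + 2))), (cf_a al 0 + 2)%Z, 1%Z.
    split; [lra|split; [|reflexivity]].
    intros n E. injection E as Ep Eq. apply (floor_add_2_not_convergent n).
    fold (num n) (den n) in Ep, Eq. rewrite <- Ep, <- Eq. reflexivity.
  - intros y [p [q [Hq [_ ->]]]]. exists p, q. split; [exact Hq|reflexivity].
Qed.

Lemma psi2s_is_min t : 1 <= t ->
  is_min (fun y => exists p q : Z, 1 <= IZR q <= t /\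
    (forall n, IZR p / IZR q <> IZR (conv_p al n) / IZR (conv_q al n)) /\
    y = Rabs (IZR q * al - IZR p))
    (psi2s al t).
Proof.
  intros Ht. apply Rmin_set_is_min, (approx_values_have_min al t).
  - exists (Rabs (IZR 1 * al - IZR (cf_a al 0 + 2))), (cf_a al 0 + 2)%Z, 1%Z.
    split; [lra|split; [exact floor_add_2_not_convergent|reflexivity]].
  - intros y [p [q [Hq [_ ->]]]]. exists p, q. split; [exact Hq|reflexivity].
Qed.

Lemma psi2_le_psi2s t : 1 <= t -> psi2 al t <= psi2s al t.
Proof.
  intros Ht. destruct (psi2s_is_min t Ht) as [[p [q [Hq [Hnc ->]]]] _].
  apply (psi2_is_min t Ht). exists p, q. split; [exact Hq|split; [|reflexivity]].
  intros n E. apply (Hnc n). injection E as -> ->. reflexivity.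
Qed.

Lemma kappa_le_kappa_star : ER_le (kappa al) (kappa_star al).
Proof.
  unfold kappa, kappa_star. rewrite <- (ER_scale_1 (Liminf _)).
  apply Liminf_scale_le; [lra|]. intros c [T HT]. exists (Rmax T 1). intros t Ht.
  pose proof (Rmax_l T 1). pose proof (Rmax_r T 1).
  specialize (HT t ltac:(lra)). pose proof (psi2_le_psi2s t ltac:(lra)). nra.
Qed.

Lemma quality_gt_of_eventually c T k :
  (forall t, t >= T -> t * psi al t > c) -> T <= IZR (den k) -> quality k > c.
Proof.
  intros HT Hk. specialize (HT (IZR (den k)) ltac:(lra)).
  pose proof (psi_le_err k). pose proof (den_pos k) as [H1 _]. apply IZR_le in H1.
  unfold quality. nra.
Qed.

Lemma nonconvergent_gt_twice c M (p q : Z) :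
  (forall k, (M <= k)%nat -> quality k > c) ->
  (den (S M) <= q)%Z -> (forall j, (p, q) <> (num j, den j)) ->
  IZR q * Rabs (IZR q * al - IZR p) > 2 * c.
Proof.
  intros Hc Hq Hnc. destruct (den_bracket (S M) q Hq) as [[|k] [Hk Hbr]]; [lia|].
  pose proof (Hc k ltac:(lia)). pose proof (Hc (S k) ltac:(lia)). pose proof (Hc (S (S k)) ltac:(lia)).
  destruct (nonconvergent_quality_bound k p q Hbr Hnc) as [G|[G|G]]; lra.
Qed.

Lemma twice_lambda_le_kappa : ER_le (ER_mul2 (lambda_ al)) (kappa al).
Proof.
  unfold kappa, lambda_. rewrite <- ER_scale_2.
  apply Liminf_scale_le; [lra|]. intros c [T HT].
  set (M := Z.to_nat (up T)).
  assert (HM : forall k, (M <= k)%nat -> quality k > c).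
  { intros k Hk. apply (quality_gt_of_eventually c T k HT).
    pose proof (den_ge_index M). pose proof (den_monotone M k Hk).
    assert (Hup : (up T <= den k)%Z) by (unfold M in *; lia).
    apply IZR_le in Hup. destruct (archimed T). lra. }
  pose proof (err_pos M).
  set (T' := Rmax 1 (2 * c / err M + 1)).
  assert (HT'1 : 1 <= T') by apply Rmax_l.
  assert (HT'c : 2 * c < T' * err M).
  { assert (2 * c / err M + 1 <= T') by apply Rmax_r.
    assert (2 * c = 2 * c / err M * err M) by (field; lra). nra. }
  exists T'. intros t Ht.
  destruct (psi2_is_min t ltac:(lra)) as [[p [q [[Hq1 Hqt] [Hnc ->]]]] _].
  pose proof (Rabs_pos (IZR q * al - IZR p)).
  destruct (Z_lt_le_dec q (den (S M))) as [Hl|Hl].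
  - apply le_IZR in Hq1. pose proof (best_approximation M p q ltac:(lia)). nra.
  - pose proof (nonconvergent_gt_twice c M p q HM Hl Hnc). nra.
Qed.


Section Sqrt2Equivalent.
Variables a b c d : Z.
Hypothesis Hdet : ((a * d - b * c = 1) \/ (a * d - b * c = -1))%Z.
Hypothesis Hal : al = (IZR a * sqrt 2 + IZR b) / (IZR c * sqrt 2 + IZR d).

Local Notation s := (sqrt 2).

Definition mob_den := IZR c * s + IZR d.
Definition mob_det := (a * d - b * c)%Z.
Definition mob_den_norm := Rabs (IZR d * IZR d - 2 * IZR c * IZR c).
Definition zdev (p q : Z) := IZR q * al - IZR p.
(* [(q al - p) (c s + d) = X s + Y]; [Y^2 - 2 X^2] is the norm of [Y + X s]. *)
Definition Xc (p q : Z) := (q * a - p * c)%Z.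
Definition Yc (p q : Z) := (q * b - p * d)%Z.
Definition pell_norm (p q : Z) := (Yc p q * Yc p q - 2 * Xc p q * Xc p q)%Z.

Lemma mob_den_nz : mob_den <> 0.
Proof.
  intros E. apply (Hirr 0%Z 1%Z); [lia|]. rewrite Hal. fold mob_den. rewrite E.
  unfold Rdiv. rewrite Rinv_0. simpl. ring.
Qed.

Lemma mob_det_sq : (mob_det * mob_det = 1)%Z.
Proof. unfold mob_det. destruct Hdet as [-> | ->]; reflexivity. Qed.

Lemma zdev_mob_den p q : zdev p q * mob_den = IZR (Xc p q) * s + IZR (Yc p q).
Proof.
  unfold zdev, Xc, Yc. rewrite Hal. fold mob_den. pose proof mob_den_nz.
  rewrite !minus_IZR, !mult_IZR. unfold mob_den in *. field. assumption.
Qed.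

(* Multiply [(Y + X s) (Y - X s)] by [(c s + d)^2], using [d X - c Y = mob_det q]. *)
Lemma norm_identity p q : 2 * s * IZR mob_det * IZR q * zdev p q =
  zdev p q * zdev p q * (IZR d * IZR d - 2 * IZR c * IZR c) - IZR (pell_norm p q).
Proof.
  assert (Hq : (mob_det * q = d * Xc p q - c * Yc p q)%Z) by (unfold mob_det, Xc, Yc; ring).
  apply (f_equal IZR) in Hq. rewrite mult_IZR, minus_IZR, !mult_IZR in Hq.
  unfold pell_norm. rewrite minus_IZR, !mult_IZR.
  pose proof mob_den_nz. pose proof (zdev_mob_den p q) as Hz. pose proof sqrt2_sq.
  apply (Rmult_eq_reg_r (mob_den * mob_den)); [|apply Rmult_integral_contrapositive; auto].
  replace (2 * s * IZR mob_det * IZR q * zdev p q) with (2 * s * (IZR mob_det * IZR q) * zdev p q) by ring.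
  rewrite Hq. unfold mob_den in *. nsatz.
Qed.

Lemma norm_estimate p q : (0 <= q)%Z ->
  Rabs (2 * s * IZR q * Rabs (zdev p q) - Rabs (IZR (pell_norm p q))) <= mob_den_norm * (zdev p q * zdev p q).
Proof.
  intros Hq. apply IZR_le in Hq. pose proof sqrt2_bounds.
  replace (2 * s * IZR q * Rabs (zdev p q)) with (Rabs (2 * s * IZR mob_det * IZR q * zdev p q)).
  - rewrite norm_identity.
    replace (mob_den_norm * (zdev p q * zdev p q))
      with (Rabs (zdev p q * zdev p q * (IZR d * IZR d - 2 * IZR c * IZR c) - IZR (pell_norm p q) - - IZR (pell_norm p q))).
    + rewrite <- (Rabs_Ropp (IZR (pell_norm p q))) at 1. apply Rabs_triang_inv2.
    + unfold mob_den_norm. replace (_ - _ - _) with (zdev p q * zdev p q * (IZR d * IZR d - 2 * IZR c * IZR c)) by ring.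
      rewrite Rabs_mult, (Rabs_right (_ * _)) by nra. ring.
  - assert (Hd : Rabs (IZR mob_det) = 1).
    { unfold mob_det. destruct Hdet as [-> | ->]; [apply Rabs_R1|rewrite Rabs_left; simpl; lra]. }
    rewrite !Rabs_mult, Hd, (Rabs_right 2), (Rabs_right s), (Rabs_right (IZR q)) by lra. ring.
Qed.

Lemma norm_nonzero p q : (q <> 0)%Z -> pell_norm p q <> 0%Z.
Proof.
  intros Hq HN. unfold pell_norm in HN.
  assert (HX : Xc p q = 0%Z) by (apply (sqrt2_irrational_Z _ (Yc p q)); lia).
  rewrite HX in HN. assert (HY : Yc p q = 0%Z) by nia.
  assert (Hdq : (mob_det * q = d * Xc p q - c * Yc p q)%Z) by (unfold mob_det, Xc, Yc; ring).
  rewrite HX, HY in Hdq. pose proof mob_det_sq. nia.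
Qed.

Lemma norm_lower_bound p q : (1 <= q)%Z ->
  1 - mob_den_norm * (zdev p q * zdev p q) <= 2 * s * IZR q * Rabs (zdev p q).
Proof.
  intros Hq. pose proof (norm_estimate p q ltac:(lia)) as Hest.
  assert (HN : 1 <= Rabs (IZR (pell_norm p q))).
  { pose proof (norm_nonzero p q ltac:(lia)) as HN.
    rewrite <- abs_IZR. apply IZR_le. lia. }
  pose proof (Rle_abs (- (2 * s * IZR q * Rabs (zdev p q) - Rabs (IZR (pell_norm p q))))) as Hneg.
  rewrite Rabs_Ropp in Hneg. lra.
Qed.

Lemma lambda_ge_inv_2sqrt2 : ER_le (Fin (1 / (2 * s))) (lambda_ al).
Proof.
  unfold lambda_. apply Fin_le_Liminf. intros eps Heps. pose proof sqrt2_bounds.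
  destruct (small_square_bound mob_den_norm (s * eps) (Rabs_pos _) ltac:(nra)) as [eta [Heta HK]].
  exists (Rmax 1 (1 / eta)). intros t Ht.
  pose proof (Rmax_l 1 (1 / eta)). pose proof (Rmax_r 1 (1 / eta)).
  destruct (psi_is_min t ltac:(lra)) as [[q [[Hq1 Hqt] ->]] _].
  destruct (dist_Z_attained (IZR q * al)) as [k ->]. fold (zdev k q).
  apply le_IZR in Hq1. pose proof (Rabs_pos (zdev k q)).
  apply (Rmult_gt_reg_l (2 * s)); [lra|].
  replace (2 * s * (1 / (2 * s) - eps)) with (1 - 2 * s * eps) by (field; lra).
  destruct (Rlt_le_dec (Rabs (zdev k q)) eta) as [Hz|Hz].
  - pose proof (norm_lower_bound k q Hq1). apply IZR_le in Hq1.
    pose proof (sq_le_of_abs_le (zdev k q) eta ltac:(lra)) as Hzz.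
    assert (mob_den_norm * (zdev k q * zdev k q) <= mob_den_norm * (eta * eta))
      by (apply Rmult_le_compat_l; [apply Rabs_pos|exact Hzz]).
    assert (IZR q * Rabs (zdev k q) <= t * Rabs (zdev k q)) by (apply Rmult_le_compat_r; lra).
    nra.
  - assert (1 / eta * eta = 1) by (field; lra).
    assert (1 / eta * eta <= t * eta) by (apply Rmult_le_compat_r; lra).
    assert (t * eta <= t * Rabs (zdev k q)) by (apply Rmult_le_compat_l; lra).
    nra.
Qed.

Lemma norm_minus2_pair eta : 0 < eta -> mob_den_norm * (eta * eta) < 2 ->
  exists p q, (1 <= q)%Z /\ pell_norm p q = (-2)%Z /\ Rabs (zdev p q) < eta.
Proof.
  intros He HK. pose proof mob_den_nz as Hcs. apply Rabs_pos_lt in Hcs.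
  assert (Hpell : exists X Y : Z, (Y * Y - 2 * X * X = -2)%Z /\
    Rabs (IZR X * s + IZR Y) < eta * Rabs mob_den /\ (0 <= mob_det * (d * X - c * Y))%Z).
  { destruct (pell_minus2_small (eta * Rabs mob_den) ltac:(nra)) as [X [Y [HN Hsmall]]].
    destruct (Z_le_dec 0 (mob_det * (d * X - c * Y))) as [Hs|Hs]; [exists X, Y; auto|].
    exists (- X)%Z, (- Y)%Z. split; [lia|split; [|nia]].
    rewrite !opp_IZR, <- Rabs_Ropp. replace (- (- IZR X * s + - IZR Y)) with (IZR X * s + IZR Y) by ring.
    exact Hsmall. }
  destruct Hpell as [X [Y [HN [Hsmall Hsign]]]].
  set (q := (mob_det * (d * X - c * Y))%Z). set (p := (mob_det * (b * X - a * Y))%Z).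
  assert (HX : Xc p q = X)
    by (unfold Xc, p, q; transitivity (mob_det * mob_det * X)%Z; [unfold mob_det; ring|rewrite mob_det_sq; ring]).
  assert (HY : Yc p q = Y)
    by (unfold Yc, p, q; transitivity (mob_det * mob_det * Y)%Z; [unfold mob_det; ring|rewrite mob_det_sq; ring]).
  assert (HNpq : pell_norm p q = (-2)%Z) by (unfold pell_norm; rewrite HX, HY; lia).
  assert (Hz : Rabs (zdev p q) < eta).
  { pose proof (zdev_mob_den p q) as Ez. rewrite HX, HY in Ez.
    apply (Rmult_lt_reg_r (Rabs mob_den)); [exact Hcs|]. rewrite <- Rabs_mult, Ez. exact Hsmall. }
  exists p, q. split; [|split; assumption].
  destruct (Z.eq_dec q 0) as [Hq0|Hq0]; [exfalso|lia].
  pose proof (norm_estimate p q ltac:(lia)) as Hest.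
  apply (f_equal IZR) in Hq0. rewrite HNpq, <- abs_IZR, Hq0 in Hest.
  replace (2 * s * 0 * Rabs (zdev p q) - IZR (Z.abs (-2))) with (-2) in Hest by (simpl; ring).
  rewrite Rabs_left in Hest by lra.
  pose proof (sq_le_of_abs_le (zdev p q) eta ltac:(lra)).
  assert (mob_den_norm * (zdev p q * zdev p q) <= mob_den_norm * (eta * eta)) by (apply Rmult_le_compat_l; [apply Rabs_pos|assumption]).
  lra.
Qed.

Lemma norm_minus2_lower_bound p q : (1 <= q)%Z -> pell_norm p q = (-2)%Z ->
  mob_den_norm * (zdev p q * zdev p q) <= 1 / 20 -> 39 / 20 <= 2 * s * IZR q * Rabs (zdev p q).
Proof.
  intros Hq HN Hsmall. pose proof (norm_estimate p q ltac:(lia)) as Hest.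
  rewrite HN, <- abs_IZR in Hest. simpl (IZR (Z.abs (-2))) in Hest.
  pose proof (Rle_abs (- (2 * s * IZR q * Rabs (zdev p q) - 2))) as Hneg.
  rewrite Rabs_Ropp in Hneg. lra.
Qed.

Lemma convergent_ratio_scaling n p q : (1 <= q)%Z ->
  IZR p / IZR q = IZR (num n) / IZR (den n) ->
  (pell_norm (num n) (den n) * (q * q) = pell_norm p q * (den n * den n))%Z /\
  IZR q * err n = IZR (den n) * Rabs (zdev p q).
Proof.
  intros Hq Hr. pose proof (den_pos n) as [Hn _].
  pose proof (ratio_eq_cross p q (num n) (den n) ltac:(lia) ltac:(lia) Hr) as Hcross.
  split.
  - assert (HX : (Xc (num n) (den n) * q = Xc p q * den n)%Z).
    { unfold Xc. transitivity (den n * q * a - num n * q * c)%Z; [ring|]. rewrite <- Hcross. ring. }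
    assert (HY : (Yc (num n) (den n) * q = Yc p q * den n)%Z).
    { unfold Yc. transitivity (den n * q * b - num n * q * d)%Z; [ring|]. rewrite <- Hcross. ring. }
    unfold pell_norm.
    transitivity ((Yc (num n) (den n) * q) * (Yc (num n) (den n) * q)
                  - 2 * (Xc (num n) (den n) * q) * (Xc (num n) (den n) * q))%Z; [ring|].
    rewrite HX, HY. ring.
  - apply IZR_le in Hq. apply IZR_le in Hn. apply (f_equal IZR) in Hcross. rewrite !mult_IZR in Hcross.
    unfold err, dev, zdev.
    rewrite <- (Rabs_right (IZR q)) at 1 by lra. rewrite <- (Rabs_right (IZR (den n))) at 2 by lra.
    rewrite <- !Rabs_mult. f_equal.
    transitivity (IZR (den n) * (IZR q * al) - IZR (num n) * IZR q); [ring|].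
    rewrite <- Hcross. ring.
Qed.

Lemma norm_minus2_not_convergent p q : (1 <= q)%Z -> pell_norm p q = (-2)%Z ->
  mob_den_norm * (zdev p q * zdev p q) <= 1 / 20 ->
  forall n, IZR p / IZR q <> IZR (conv_p al n) / IZR (conv_q al n).
Proof.
  intros Hq HN Hsmall n Hr.
  destruct (convergent_ratio_scaling n p q Hq Hr) as [HNn Herr]. rewrite HN in HNn.
  pose proof (norm_minus2_lower_bound p q Hq HN Hsmall) as Hlow.
  pose proof (den_pos n) as [Hn _]. pose proof sqrt2_bounds. pose proof (err_pos n).
  pose proof (Rabs_pos (zdev p q)). pose proof (quality_le_1 n) as Hq1.
  set (Nn := pell_norm (num n) (den n)) in *.
  destruct (Z_lt_le_dec Nn (-2)) as [Hlt|Hge].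
  - (* [3 q^2 <= 2 q_n^2] forces [quality n > 1] *)
    assert (H3 : (3 * (q * q) <= 2 * (den n * den n))%Z) by nia.
    apply IZR_le in H3. rewrite !mult_IZR in H3. apply IZR_le in Hq. apply IZR_le in Hn.
    assert (Hqual : quality n * IZR q = IZR (den n) * IZR (den n) * Rabs (zdev p q))
      by (unfold quality; transitivity (IZR (den n) * (IZR q * err n)); [ring|rewrite Herr; ring]).
    assert (3 / 2 * (IZR q * IZR q) * Rabs (zdev p q) <= quality n * IZR q) by nra.
    assert (3 / 2 * IZR q * Rabs (zdev p q) <= quality n)
      by (apply (Rmult_le_reg_r (IZR q)); nra).
    assert (68 / 100 <= IZR q * Rabs (zdev p q)) by nra.
    lra.
  - destruct (Z.eq_dec Nn (-2)) as [E2|E2]; [|destruct (Z.eq_dec Nn (-1)) as [E1|E1]].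
    + (* [(p, q)] is the convergent itself, whose quality together with the next one exceeds 1 *)
      assert (Hqd : q = den n) by (rewrite E2 in HNn; nia). subst q.
      apply IZR_le in Hn.
      assert (Hz : err n = Rabs (zdev p (den n))) by (apply (Rmult_eq_reg_l (IZR (den n))); lra).
      pose proof (norm_lower_bound (num (S n)) (den (S n)) (proj1 (den_pos (S n)))) as HS.
      change (zdev (num (S n)) (den (S n))) with (dev (S n)) in HS.
      pose proof (err_decr n).
      pose proof (sq_le_of_abs_le (dev (S n)) (Rabs (zdev p (den n))) ltac:(fold (err (S n)); lra)).
      assert (mob_den_norm * (dev (S n) * dev (S n)) <= 1 / 20).
      { eapply Rle_trans; [|exact Hsmall]. apply Rmult_le_compat_l; [apply Rabs_pos|].
        replace (zdev p (den n) * zdev p (den n)) with (Rabs (zdev p (den n)) * Rabs (zdev p (den n)))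
          by (rewrite <- Rabs_mult; apply Rabs_right; nra).
        assumption. }
      pose proof (quality_sum_le_1 n). unfold quality in *. fold (err (S n)) in HS.
      rewrite Hz in *. nra.
    + rewrite E1 in HNn. pose proof (sqrt2_irrational_Z (den n) q ltac:(lia)). lia.
    + nia.
Qed.

Lemma kappa_star_le_inv_sqrt2 : ER_le (kappa_star al) (Fin (1 / s)).
Proof.
  unfold kappa_star. apply Liminf_le_Fin. intros eps Heps T. pose proof sqrt2_bounds.
  set (T1 := Rmax T 1). assert (HT1 : T <= T1) by apply Rmax_l. assert (HT1' : 1 <= T1) by apply Rmax_r.
  destruct (small_square_bound mob_den_norm (Rmin (1 / 20) (s * eps)) (Rabs_pos _)
    ltac:(apply Rmin_glb_lt; nra)) as [eta0 [Heta0 HK0]].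
  pose proof (Rmin_l (1 / 20) (s * eps)). pose proof (Rmin_r (1 / 20) (s * eps)).
  set (eta := Rmin eta0 (1 / (2 * T1))).
  assert (He1 : eta <= eta0) by apply Rmin_l. assert (He2 : eta <= 1 / (2 * T1)) by apply Rmin_r.
  assert (He0 : 0 < eta) by (apply Rmin_glb_lt; [lra|apply Rdiv_lt_0_compat; lra]).
  assert (HKe : mob_den_norm * (eta * eta) <= mob_den_norm * (eta0 * eta0))
    by (apply Rmult_le_compat_l; [apply Rabs_pos|nra]).
  destruct (norm_minus2_pair eta He0 ltac:(lra)) as [p [q [Hq [HN Hz]]]].
  assert (Hsmall : mob_den_norm * (zdev p q * zdev p q) <= mob_den_norm * (eta * eta))
    by (apply Rmult_le_compat_l; [apply Rabs_pos|apply sq_le_of_abs_le; lra]).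
  pose proof (norm_minus2_lower_bound p q Hq HN ltac:(lra)) as Hlow.
  assert (Hup : 2 * s * IZR q * Rabs (zdev p q) <= 2 + s * eps).
  { pose proof (norm_estimate p q ltac:(lia)) as Hest.
    rewrite HN, <- abs_IZR in Hest. simpl (IZR (Z.abs (-2))) in Hest.
    pose proof (Rle_abs (2 * s * IZR q * Rabs (zdev p q) - 2)). lra. }
  apply IZR_le in Hq. pose proof (Rabs_pos (zdev p q)).
  exists (IZR q). split.
  - assert (Hq2 : 1 / 2 < IZR q * Rabs (zdev p q)) by nra.
    assert (2 * T1 * (1 / (2 * T1)) = 1) by (field; lra).
    assert (IZR q * Rabs (zdev p q) <= IZR q * (1 / (2 * T1))) by (apply Rmult_le_compat_l; lra).
    nra.
  - destruct (psi2s_is_min (IZR q) Hq) as [_ Hmin].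
    assert (psi2s al (IZR q) <= Rabs (zdev p q)).
    { apply Hmin. exists p, q. split; [lra|split; [|reflexivity]].
      apply norm_minus2_not_convergent; [apply le_IZR; exact Hq|exact HN|lra]. }
    assert (IZR q * psi2s al (IZR q) <= IZR q * Rabs (zdev p q)) by (apply Rmult_le_compat_l; lra).
    apply (Rmult_lt_reg_l (2 * s)); [lra|].
    replace (2 * s * (1 / s + eps)) with (2 + 2 * s * eps) by (field; lra). nra.
Qed.

End Sqrt2Equivalent.
End ContinuedFraction.

Theorem mainTheorem15 (alpha : R) (Hirr : irrational alpha) :
  ER_le (kappa alpha) (kappa_star alpha) /\
  ER_le (ER_mul2 (lambda_ alpha)) (kappa alpha) /\
  (equivalent alpha (sqrt 2) ->
     kappa_star alpha = kappa alpha /\ kappa alpha = ER_mul2 (lambda_ alpha)).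
Proof.
  pose proof (kappa_le_kappa_star alpha Hirr) as Hks.
  pose proof (twice_lambda_le_kappa alpha Hirr) as Hlk.
  split; [exact Hks|split; [exact Hlk|]].
  intros [a [b [c [d [Hdet Hal]]]]].
  pose proof (ER_le_mul2 _ _ (lambda_ge_inv_2sqrt2 alpha Hirr a b c d Hdet Hal)) as Hl.
  replace (2 * (1 / (2 * sqrt 2))) with (1 / sqrt 2) in Hl
    by (pose proof sqrt2_bounds; field; lra).
  pose proof (kappa_star_le_inv_sqrt2 alpha Hirr a b c d Hdet Hal) as Hsk.
  assert (Hsl : ER_le (kappa_star alpha) (ER_mul2 (lambda_ alpha))) by (eapply ER_le_trans; eauto).
  split; apply ER_le_antisym; eauto using ER_le_trans.
Qed.
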